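(* For any connected graph $G$ of order $n\ge 2$ with maximum degree $\Delta$, $$\max\Big\{\gamma(G),\frac{2}{\Delta}\alpha(G)\Big\}+\beta(G)\le\gamma_{oidR}(G)\le 3\beta(G).$$ Moreover, both bounds are sharp: there exist connected graphs attaining equality in the lower bound and connected graphs attaining equality in the upper bound.
   Context: $\gamma(G)$ is the domination number, $\alpha(G)$ the independence number and $\beta(G)$ the vertex cover number of $G$. A DRD function of $G$ is $f:V(G)\to\{0,1,2,3\}$ such that every vertex with value $0$ has a neighbor with value $3$ or two neighbors with value $2$, and every vertex with value $1$ has a neighbor with value at least $2$; it is an OIDRD function if the set of vertices with value $0$ is independent, and $\gamma_{oidR}(G)$ is the minimum weight $\sum_v f(v)$ of an OIDRD function. *)

From mathcomp Require Import all_boot all_order all_algebra.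
Set Implicit Arguments. Unset Strict Implicit. Unset Printing Implicit Defensive.
Import Order.TTheory GRing.Theory Num.Theory.

Section Graph.
Variables (T : finType) (e : rel T).

Definition simple_graph : Prop := symmetric e /\ irreflexive e.

Definition connected_graph : Prop := forall x y : T, connect e x y.

Definition nbhd (v : T) : {set T} := [set u | e v u].
Definition deg (v : T) : nat := #|nbhd v|.
Definition max_degree : nat := \max_(v : T) deg v.

Definition dominating (D : {set T}) : bool :=
  [forall v, (v \in D) || [exists u in D, e v u]].
Definition independent (S : {set T}) : bool :=
  [forall x in S, forall y in S, ~~ e x y].
Definition vertex_cover (S : {set T}) : bool :=
  [forall x, forall y, e x y ==> (x \in S) || (y \in S)].

Definition gamma : nat := \big[minn/#|T|]_(D : {set T} | dominating D) #|D|.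
Definition alpha : nat := \max_(S : {set T} | independent S) #|S|.
Definition beta : nat := \big[minn/#|T|]_(S : {set T} | vertex_cover S) #|S|.

Definition DRD (f : {ffun T -> 'I_4}) : bool :=
  [forall v,
     ((f v : nat) == 0) ==>
       ([exists u, e v u && ((f u : nat) == 3)] ||
        [exists u1, exists u2, [&& u1 != u2, e v u1, e v u2,
                                  (f u1 : nat) == 2 & (f u2 : nat) == 2]])]
  && [forall v, ((f v : nat) == 1) ==> [exists u, e v u && (2 <= f u)]].

Definition zero_set (f : {ffun T -> 'I_4}) : {set T} := [set v | (f v : nat) == 0].

Definition OIDRD (f : {ffun T -> 'I_4}) : bool := DRD f && independent (zero_set f).

Definition weight (f : {ffun T -> 'I_4}) : nat := \sum_(v : T) (f v : nat).

(* outer-independent double Roman domination number; the constant function 3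
   is always an OIDRD function of weight 3|V|, so 3|V| is a safe default. *)
Definition gamma_oidR : nat :=
  \big[minn/(3 * #|T|)]_(f : {ffun T -> 'I_4} | OIDRD f) weight f.

Definition lower_bound : rat :=
  (Num.max (gamma%:R) (2 * alpha%:R / max_degree%:R) + beta%:R)%R.

End Graph.

From mathcomp Require Import all_boot all_order all_algebra zify.
Import Order.TTheory GRing.Theory Num.Theory.
Set Implicit Arguments. Unset Strict Implicit. Unset Printing Implicit Defensive.

(* Let f be an OIDRD function and V_k = {v | f v >= k}.  Then V_2 dominates,
   V_1 is the complement of the independent set of zeros, hence a vertex
   cover, and w(f) = |V_1| + |V_2| + |V_3|; so gamma + beta <= w(f).  A zero
   has a neighbour of value 3 or two of value 2, so counting the edges from
   the zeros to V_2 and V_3 gives 2 |V \ V_1| <= Delta (|V_2| + |V_3|).  With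
   alpha + beta <= n this yields 2 alpha / Delta + beta <= w(f) when
   Delta >= 2, while a connected graph with Delta = 1 is K_2.  Conversely, the
   value 3 on a minimum vertex cover and 0 elsewhere is an OIDRD function of
   weight 3 beta.  K_2 attains both bounds. *)

Lemma bigminn_le_cond (I : finType) (P : pred I) (F : I -> nat) d j :
  P j -> (\big[minn/d]_(i | P i) F i <= F j)%N.
Proof. by move=> Pj; have := bigmin_le_cond d F Pj; rewrite minEnat. Qed.

Lemma bigminn_attained (I : finType) (P : pred I) (F : I -> nat) d j :
  P j -> (forall i, P i -> F i <= d)%N ->
  exists2 i, P i & \big[minn/d]_(i | P i) F i = F i.
Proof.
move=> Pj Fd; rewrite -minEnat (bigmin_eq_arg d j P F Pj Fd).
by case: arg_minP => // i Pi _; exists i.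
Qed.

Lemma card_sum (T : finType) (A : {set T}) : #|A| = (\sum_v (v \in A))%N.
Proof. by rewrite -sum1_card big_mkcond; apply: eq_bigr => v _; case: (v \in A). Qed.

Section Bounds.
Variables (T : finType) (e : rel T).

Lemma independentP (S : {set T}) :
  reflect (forall x y, x \in S -> y \in S -> ~~ e x y) (independent e S).
Proof.
rewrite /independent; apply: (iffP forall_inP) => [ind x y xS|ind x xS].
  exact/(forall_inP (ind x xS)).
by apply/forall_inP => y; exact: ind.
Qed.

Lemma vertex_coverP (S : {set T}) :
  reflect (forall x y, e x y -> (x \in S) || (y \in S)) (vertex_cover e S).
Proof.
rewrite /vertex_cover; apply: (iffP forallP) => [cov x y|cov x].
  exact/implyP/(forallP (cov x)).
by apply/forallP => y; apply/implyP; exact: cov.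
Qed.

Lemma independentC (S : {set T}) : vertex_cover e S -> independent e (~: S).
Proof.
move/vertex_coverP => cov; apply/independentP => x y; rewrite !inE => xS yS.
by apply/negP => /cov; rewrite (negbTE xS) (negbTE yS).
Qed.

Lemma vertex_coverC (S : {set T}) : independent e S -> vertex_cover e (~: S).
Proof.
move/independentP => ind; apply/vertex_coverP => x y exy; rewrite !inE -negb_and.
by apply: contraL exy => /andP[]; exact: ind.
Qed.

Lemma alpha_ge_independent (S : {set T}) : independent e S -> (#|S| <= alpha e)%N.
Proof. exact: leq_bigmax_cond. Qed.

Lemma beta_le_cover (S : {set T}) : vertex_cover e S -> (beta e <= #|S|)%N.
Proof. exact: bigminn_le_cond. Qed.

Lemma gamma_le_dominating (S : {set T}) : dominating e S -> (gamma e <= #|S|)%N.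
Proof. exact: bigminn_le_cond. Qed.

Lemma vertex_coverT : vertex_cover e [set: T].
Proof. by apply/vertex_coverP => x y _; rewrite inE. Qed.

Lemma beta_attained : exists2 S, vertex_cover e S & beta e = #|S|.
Proof. exact: (bigminn_attained vertex_coverT (fun S _ => max_card S)). Qed.

Lemma alpha_add_beta_le : (alpha e + beta e <= #|T|)%N.
Proof.
have := beta_le_cover vertex_coverT; rewrite cardsT => beta_le_n.
suff : (alpha e <= #|T| - beta e)%N by lia.
apply/bigmax_leqP => S /vertex_coverC /beta_le_cover; have := cardsC S; lia.
Qed.

Definition superlevel (f : {ffun T -> 'I_4}) (k : nat) : {set T} := [set v | k <= f v].

Lemma superlevel1 f : superlevel f 1 = ~: zero_set f.
Proof. by apply/setP => v; rewrite !inE lt0n. Qed.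

Lemma superlevel_subset f k l : (k <= l)%N -> superlevel f l \subset superlevel f k.
Proof. by move=> kl; apply/subsetP => v; rewrite !inE; exact: leq_trans. Qed.

Lemma weight_superlevel f :
  weight f = (#|superlevel f 1| + #|superlevel f 2| + #|superlevel f 3|)%N.
Proof.
rewrite /weight !card_sum -!big_split; apply: eq_bigr => v _; rewrite !inE.
by case: (f v) => -[|[|[|[|]]]].
Qed.

Lemma DRD_dominating f : DRD e f -> dominating e (superlevel f 2).
Proof.
case/andP => /forallP DRD0 /forallP DRD1; apply/forallP => v; rewrite inE.
have [//|fv_lt2] := leqP 2 (f v); apply/existsP.
case: (eqVneq (f v : nat) 0) => [fv0|fv_neq0].
  case/orP: (implyP (DRD0 v) (introT eqP fv0)).
    by case/existsP => u /andP[evu /eqP fu]; exists u; rewrite inE fu evu.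
  case/existsP => u /existsP[_ /and5P[_ evu _ /eqP fu _]].
  by exists u; rewrite inE fu evu.
have fv1 : (f v : nat) == 1 by move: fv_lt2 fv_neq0; case: (f v : nat) => [|[|]].
by case/existsP: (implyP (DRD1 v) fv1) => u /andP[evu fu]; exists u; rewrite inE fu evu.
Qed.

Lemma DRD_nbhd_zero f v : DRD e f -> v \in zero_set f ->
  (2 <= #|nbhd e v :&: superlevel f 2| + #|nbhd e v :&: superlevel f 3|)%N.
Proof.
case/andP => /forallP DRD0 _; rewrite inE => fv0.
case/orP: (implyP (DRD0 v) fv0).
  case/existsP => u /andP[evu /eqP fu].
  have u_in k : (k <= 3)%N -> u \in nbhd e v :&: superlevel f k.
    by move=> k3; rewrite !inE evu fu.
  by rewrite -[2]/(1 + 1)%N; apply: leq_add; rewrite card_gt0; apply/set0Pn;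
    exists u; exact: u_in.
case/existsP => u1 /existsP[u2 /and5P[u12 evu1 evu2 /eqP fu1 /eqP fu2]].
apply: leq_trans (leq_addr _ _); apply/card_gt1P; exists u1, u2.
by rewrite !inE evu1 evu2 fu1 fu2.
Qed.

Lemma gamma_add_beta_le_weight f : OIDRD e f -> (gamma e + beta e <= weight f)%N.
Proof.
case/andP => DRDf ind0; rewrite weight_superlevel superlevel1.
have := gamma_le_dominating (DRD_dominating DRDf).
have := beta_le_cover (vertex_coverC ind0); lia.
Qed.

Lemma DRD_weight_ge3 f : (1 < #|T|)%N -> DRD e f -> (3 <= weight f)%N.
Proof.
move=> T_gt1 DRDf.
have S2_gt0 : (0 < #|superlevel f 2|)%N.
  case/card_gt1P: T_gt1 => x _; rewrite card_gt0; apply/set0Pn.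
  case/orP: (forallP (DRD_dominating DRDf) x) => [xS|/existsP[u /andP[uS _]]].
  - by exists x.
  - by exists u.
have := subset_leq_card (superlevel_subset f (isT : 1 <= 2)%N).
have := subset_leq_card (superlevel_subset f (isT : 2 <= 3)%N).
rewrite weight_superlevel; have [V0_0|[v vV0]] := set_0Vmem (zero_set f).
  by rewrite superlevel1 V0_0 setC0 cardsT; lia.
have := DRD_nbhd_zero DRDf vV0.
have := subset_leq_card (subsetIr (nbhd e v) (superlevel f 2)).
have := subset_leq_card (subsetIr (nbhd e v) (superlevel f 3)); lia.
Qed.

Lemma deg_le_max_degree v : (deg e v <= max_degree e)%N.
Proof. exact: (leq_bigmax (F := deg e)). Qed.

Lemma max_degree_gt0 x y : e x y -> (0 < max_degree e)%N.
Proof.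
move=> exy; apply: leq_trans (deg_le_max_degree x).
by rewrite card_gt0; apply/set0Pn; exists y; rewrite inE.
Qed.

Lemma lower_bound_le_nat (w : nat) : (0 < max_degree e)%N ->
  (gamma e + beta e <= w)%N ->
  (2 * alpha e + max_degree e * beta e <= max_degree e * w)%N ->
  (lower_bound e <= w%:R)%R.
Proof.
move=> D_gt0 gamma_le alpha_le.
have D_pos : (0 < (max_degree e)%:R :> rat)%R by rewrite ltr0n.
rewrite /lower_bound -lerBrDr ge_max !lerBrDr -natrD ler_nat gamma_le /=.
rewrite -(ler_pM2r D_pos) mulrDl divfK ?gt_eqF //.
by move: alpha_le; rewrite -(ler_nat rat) natrD !natrM !(mulrC _ ((max_degree e)%:R)%R).
Qed.

Definition cover_function (S : {set T}) : {ffun T -> 'I_4} :=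
  [ffun v => if v \in S then ord_max else ord0].

Lemma weight_cover_function S : weight (cover_function S) = (3 * #|S|)%N.
Proof.
rewrite /weight (eq_bigr (fun v => if v \in S then 3 else 0)%N); last first.
  by move=> v _; rewrite ffunE; case: ifP.
by rewrite -big_mkcond sum_nat_const mulnC.
Qed.

Lemma OIDRD_const3 : OIDRD e [ffun => ord_max].
Proof.
by rewrite /OIDRD /DRD -andbA; apply/and3P; split; apply/forallP => v; rewrite ?inE ffunE.
Qed.

Lemma gamma_oidR_le_weight f : OIDRD e f -> (gamma_oidR e <= weight f)%N.
Proof. exact: bigminn_le_cond. Qed.

Lemma gamma_oidR_attained : exists2 f, OIDRD e f & gamma_oidR e = weight f.
Proof.
apply: (bigminn_attained OIDRD_const3) => f _.
rewrite /weight mulnC -sum_nat_const.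
by apply: leq_sum => v _; rewrite -ltnS ltn_ord.
Qed.

Lemma gamma_oidR_ge3 : (1 < #|T|)%N -> (3 <= gamma_oidR e)%N.
Proof.
by move=> T_gt1; have [f /andP[DRDf _] ->] := gamma_oidR_attained; exact: DRD_weight_ge3.
Qed.

Hypothesis e_sym : symmetric e.

Lemma card_nbhdI v (A : {set T}) : #|nbhd e v :&: A| = (\sum_(u in A) e v u)%N.
Proof.
rewrite -sum1_card big_mkcond [RHS]big_mkcond; apply: eq_bigr => u _.
by rewrite !inE; case: (e v u); case: (u \in A).
Qed.

Lemma sum_card_nbhdI_le (A B : {set T}) :
  (\sum_(v in B) #|nbhd e v :&: A| <= max_degree e * #|A|)%N.
Proof.
under eq_bigr do rewrite card_nbhdI.
rewrite exchange_big /= mulnC -sum_nat_const; apply: leq_sum => u _.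
under eq_bigr do rewrite e_sym.
rewrite -card_nbhdI; apply: leq_trans (deg_le_max_degree u).
exact/subset_leq_card/subsetIl.
Qed.

Lemma double_card_zero_set_le f : DRD e f ->
  (2 * #|zero_set f| <= max_degree e * (#|superlevel f 2| + #|superlevel f 3|))%N.
Proof.
move=> DRDf; rewrite mulnC -sum_nat_const.
apply: leq_trans (leq_sum _ (fun v => @DRD_nbhd_zero f v DRDf)) _.
by rewrite big_split mulnDr leq_add ?sum_card_nbhdI_le.
Qed.

Lemma alpha_beta_le_weight_max_degree_gt1 f : (1 < max_degree e)%N -> OIDRD e f ->
  (2 * alpha e + max_degree e * beta e <= max_degree e * weight f)%N.
Proof.
move=> D_gt1 /andP[DRDf ind0].
have := double_card_zero_set_le DRDf; have := alpha_add_beta_le.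
have := beta_le_cover (vertex_coverC ind0); have := cardsC (zero_set f).
rewrite weight_superlevel superlevel1.
have : (2 * (#|~: zero_set f| - beta e) <= max_degree e * (#|~: zero_set f| - beta e))%N.
  by rewrite leq_mul2r D_gt1 orbT.
nia.
Qed.

Hypothesis e_conn : connected_graph e.
Hypothesis T_gt1 : (1 < #|T|)%N.

Lemma nbhd_nonempty v : exists u, e v u.
Proof.
have [w wv] : exists w, w != v.
  case/card_gt1P: T_gt1 => a [b [_ _ ab]].
  by case: (eqVneq a v) => [<-|av]; [exists b; rewrite eq_sym | exists a].
case/connectP: (e_conn v w) => -[/= _ wE|u p /= /andP[evu _] _]; last by exists u.
by rewrite wE eqxx in wv.
Qed.

Lemma exists_edge : exists x y, e x y.
Proof.
case/card_gt1P: T_gt1 => x _; have [y exy] := nbhd_nonempty x; by exists x, y.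
Qed.

Lemma beta_gt0 : (0 < beta e)%N.
Proof.
have [S /vertex_coverP covS ->] := beta_attained; have [x [y /covS]] := exists_edge.
by rewrite card_gt0; case/orP => inS; apply/set0Pn; eexists; exact: inS.
Qed.

Lemma card_le2_of_max_degree_le1 : (max_degree e <= 1)%N -> (#|T| <= 2)%N.
Proof.
move=> D_le1; have [x [u exu]] := exists_edge.
have nbhd_uniq v a b : e v a -> e v b -> a = b.
  move=> eva evb; have := leq_trans (deg_le_max_degree v) D_le1.
  by move/card_le1_eqP; apply; rewrite inE.
have closedA : closed e [set x; u].
  have step a b : e a b -> a \in [set x; u] -> b \in [set x; u].
    move=> eab; rewrite !inE => /orP[/eqP ax|/eqP au]; subst a.
      by rewrite (nbhd_uniq x b u eab exu) eqxx orbT.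
    by rewrite (nbhd_uniq u b x eab) ?eqxx // e_sym.
  by move=> a b eab; apply/idP/idP; apply: step; rewrite // e_sym.
have subA : [set: T] \subset [set x; u].
  by apply/subsetP => y _; rewrite -(closed_connect closedA (e_conn x y)) !inE eqxx.
by rewrite -cardsT; apply: leq_trans (subset_leq_card subA) _; rewrite cards2 ltnS leq_b1.
Qed.

Lemma alpha_beta_le_weight f : OIDRD e f ->
  (2 * alpha e + max_degree e * beta e <= max_degree e * weight f)%N.
Proof.
move=> OIDRDf; have [D_gt1|D_le1] := ltnP 1 (max_degree e).
  exact: alpha_beta_le_weight_max_degree_gt1.
have [x [y /max_degree_gt0 D_gt0]] := exists_edge.
have := card_le2_of_max_degree_le1 D_le1; have := alpha_add_beta_le.
have := beta_gt0; have := DRD_weight_ge3 T_gt1 (andP OIDRDf).1.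
have -> : max_degree e = 1%N by lia.
lia.
Qed.

Lemma lower_bound_le_gamma_oidR : (lower_bound e <= (gamma_oidR e)%:R)%R.
Proof.
have [f OIDRDf ->] := gamma_oidR_attained.
have [x [y /max_degree_gt0 D_gt0]] := exists_edge.
exact: lower_bound_le_nat (gamma_add_beta_le_weight OIDRDf) (alpha_beta_le_weight OIDRDf).
Qed.

Lemma OIDRD_cover_function S : vertex_cover e S -> OIDRD e (cover_function S).
Proof.
move=> covS; rewrite /OIDRD /DRD -andbA; apply/and3P; split.
- apply/forallP => v; apply/implyP; rewrite ffunE; case: ifP => //= vS _.
  have [u evu] := nbhd_nonempty v; have := vertex_coverP _ covS v u evu.
  by rewrite vS /= => uS; apply/orP; left; apply/existsP; exists u; rewrite evu ffunE uS.
- by apply/forallP => v; rewrite ffunE; case: ifP.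
- suff -> : zero_set (cover_function S) = ~: S by exact: independentC.
  by apply/setP => v; rewrite !inE ffunE; case: ifP.
Qed.

Lemma gamma_oidR_le_3beta : (gamma_oidR e <= 3 * beta e)%N.
Proof.
have [S covS ->] := beta_attained; rewrite -weight_cover_function.
exact/gamma_oidR_le_weight/OIDRD_cover_function.
Qed.

End Bounds.

Definition K2 : rel bool := [rel a b | a != b].

Lemma K2_simple : simple_graph K2.
Proof. by split=> [a b|a]; rewrite /K2 /= ?eqxx // eq_sym. Qed.

Lemma K2_connected : connected_graph K2.
Proof. by case; case; rewrite ?connect0 // connect1. Qed.

Lemma card_bool_gt1 : (1 < #|{: bool}|)%N.
Proof. by rewrite card_bool. Qed.

Lemma K2_beta_gamma_oidR : beta K2 = 1%N /\ gamma_oidR K2 = 3%N.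
Proof.
have := gamma_oidR_ge3 K2 card_bool_gt1.
have := gamma_oidR_le_3beta K2_connected card_bool_gt1.
have : (beta K2 <= #|[set true]|)%N.
  by apply: beta_le_cover; apply/vertex_coverP => -[] []; rewrite !inE.
rewrite cards1; lia.
Qed.

Local Open Scope ring_scope.

Lemma K2_lower_bound : lower_bound K2 = (gamma_oidR K2)%:R.
Proof.
have [K2_sym _] := K2_simple; have [beta1 gamma_oidR3] := K2_beta_gamma_oidR.
have := lower_bound_le_gamma_oidR K2_sym K2_connected card_bool_gt1.
rewrite gamma_oidR3 => le_3; apply/le_anti; rewrite le_3 /=.
have D1 : max_degree K2 = 1%N.
  apply/eqP; rewrite eqn_leq (max_degree_gt0 (isT : K2 true false)) andbT.
  apply/bigmax_leqP => v _; apply/card_le1_eqP => a b.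
  by rewrite !inE; case: v a b => -[] [].
have alpha_ge1 : (1 <= alpha K2)%N.
  rewrite -(cards1 true); apply: alpha_ge_independent.
  by apply/independentP => x y; rewrite !inE => /eqP-> /eqP->.
have max_ge2 : (2 : rat) <= Num.max (gamma K2)%:R (2 * (alpha K2)%:R).
  by rewrite le_max -[X in X <= _ * _]mulr1 ler_pM2l // ler1n alpha_ge1 orbT.
by rewrite /lower_bound D1 beta1 divr1; apply: le_trans (lerD max_ge2 (lexx 1)).
Qed.

Theorem theorem4 :
  (forall (T : finType) (e : rel T),
     simple_graph e -> connected_graph e -> (2 <= #|T|)%N ->
     lower_bound e <= (gamma_oidR e)%:R /\ (gamma_oidR e <= 3 * beta e)%N)
  /\ (exists (T : finType) (e : rel T),
        [/\ simple_graph e, connected_graph e, (2 <= #|T|)%N &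
            lower_bound e = (gamma_oidR e)%:R])
  /\ (exists (T : finType) (e : rel T),
        [/\ simple_graph e, connected_graph e, (2 <= #|T|)%N &
            gamma_oidR e = (3 * beta e)%N]).
Proof.
have [beta1 gamma_oidR3] := K2_beta_gamma_oidR.
split=> [T e [e_sym _] e_conn T_gt1|].
  by split; [exact: lower_bound_le_gamma_oidR | exact: gamma_oidR_le_3beta].
have K2_graph (P : Prop) :
    P -> [/\ simple_graph K2, connected_graph K2, (2 <= #|{: bool}|)%N & P].
  by split; [exact: K2_simple | exact: K2_connected | exact: card_bool_gt1 |].
split; exists bool, K2; apply: K2_graph; first exact: K2_lower_bound.
by rewrite beta1 gamma_oidR3.
Qed.
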